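(* Let $p>r\geq2$ and let $A$ be a symmetric nonnegative $r$-matrix. If $A_1,\ldots,A_k$ are the nonzero components of $A$, then \[ \lambda^{(p)}(A)=\Big(\sum_{i\in[k]}\big(\lambda^{(p)}(A_i)\big)^{p/(p-r)}\Big)^{(p-r)/p}. \]
   Context: A cubical $r$-matrix of order $n$ is a function $A$ on $[n]^r$ with entries $a_{i_1,\ldots,i_r}$; symmetric means invariant under permutations of indices. For a cubical matrix $B$ of order $m$, $P_B(\mathbf{x})=\sum b_{i_1,\ldots,i_r}x_{i_1}\cdots x_{i_r}$ and $\lambda^{(p)}(B)=\max\{P_B(\mathbf{x}):\mathbf{x}\in\mathbb{R}^m,\ \sum|x_i|^p=1\}$. For $X\subset[n]$, $A[X]$ is the restriction of $A$ to $X^r$ (principal submatrix). The graph of symmetric $A$ has vertex set $[n]$ with $k,j$ adjacent whenever some nonzero entry $a_{k,i_2,\ldots,i_r}$ has $j\in\{i_2,\ldots,i_r\}$; the components of $A$ are the principal submatrices $A[X]$ where $X$ ranges over the vertex sets of the connected components of this graph. *)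

From HB Require Import structures.
From mathcomp Require Import all_boot all_order all_algebra all_fingroup.
From mathcomp Require Import all_classical all_reals all_analysis.
Set Implicit Arguments. Unset Strict Implicit. Unset Printing Implicit Defensive.
Import Order.TTheory GRing.Theory Num.Theory.
Local Open Scope ring_scope.
Local Open Scope classical_set_scope.

Definition cmatrix (R : Type) (r n : nat) := r.-tuple 'I_n -> R.

Section CubicalMatrices.
Variables (R : realType) (r : nat).

Definition csym n (A : cmatrix R r n) : Prop :=
  forall (t : r.-tuple 'I_n) (s : 'S_r),
    A [tuple tnth t (s j) | j < r] = A t.

Definition cnonneg n (A : cmatrix R r n) : Prop := forall t, 0 <= A t.

Definition Pform n (A : cmatrix R r n) (x : 'I_n -> R) : R :=
  \sum_(t : r.-tuple 'I_n) A t * \prod_(j < r) x (tnth t j).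

(* lambda^(p)(A) = max { P_A(x) : sum |x_i|^p = 1 }  (taken as the supremum) *)
Definition lambdap (p : R) n (A : cmatrix R r n) : R :=
  sup [set Pform A x | x in [set x : 'I_n -> R | \sum_(i < n) `|x i| `^ p = 1]].

Definition psub n (A : cmatrix R r n) (X : {set 'I_n}) : cmatrix R r #|X| :=
  fun t => A [tuple enum_val (tnth t j) | j < r].

Definition cadj n (A : cmatrix R r n) (k j : 'I_n) : bool :=
  [exists t : r.-tuple 'I_n,
     (A t != 0) &&
     (match val t with k' :: s => (k' == k) && (j \in s) | [::] => false end)].

Definition ccomps n (A : cmatrix R r n) : {set {set 'I_n}} :=
  ((fun i => finset (connect (fun a b => cadj A a b || cadj A b a) i)) @: [set: 'I_n])%SET.

Definition cnonzero n (A : cmatrix R r n) : bool := [exists t, A t != 0].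

End CubicalMatrices.
Arguments psub {R r n} A X _.

(* The form P_A splits as the sum of the forms of the components A[X], and
   sum_i |x_i|^p splits accordingly into weights u_X with sum_X u_X = 1.  By
   homogeneity the component X contributes at most lambda(A[X]) u_X^(r/p), and
   Hölder's inequality with exponents p/(p-r) and p/r bounds the total by the
   right-hand side.  Conversely, gluing near-maximisers of the components,
   rescaled so that u_X is proportional to lambda(A[X])^(p/(p-r)), attains the
   bound up to any epsilon. *)

From HB Require Import structures.
From mathcomp Require Import all_boot all_order all_algebra all_fingroup.
From mathcomp Require Import all_classical all_reals all_analysis.
From mathcomp Require Import ring.
Import Order.TTheory GRing.Theory Num.Theory.
Set Implicit Arguments. Unset Strict Implicit. Unset Printing Implicit Defensive.
Local Open Scope ring_scope.
Local Open Scope classical_set_scope.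

Lemma sum_unique_cover (V : nmodType) (I T : finType) (S : {set I})
    (Q : I -> T -> bool) (F : T -> V) :
  (forall t, F t != 0 ->
     exists2 X, X \in S & Q X t /\ forall Y, Y \in S -> Q Y t -> Y = X) ->
  \sum_t F t = \sum_(X in S) \sum_(t | Q X t) F t.
Proof.
move=> cover; under [RHS]eq_bigr do rewrite big_mkcond.
rewrite exchange_big /=; apply: eq_bigr => t _.
have [->|Ft_neq0] := eqVneq (F t) 0; first by rewrite big1 // => X _; case: ifP.
have [X XS [QXt QYt]] := cover t Ft_neq0.
rewrite (bigD1 X) //= QXt big1 ?addr0 // => Y /andP[YS YX].
by case: ifP => // /(QYt Y YS) YeqX; rewrite YeqX eqxx in YX.
Qed.

Lemma sum_tuple_in_set (V : nmodType) r n (X : {set 'I_n}) (G : r.-tuple 'I_n -> V) :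
  (0 < r)%N ->
  \sum_(t | [forall j, tnth t j \in X]) G t =
  \sum_(t : r.-tuple 'I_#|X|) G [tuple enum_val (tnth t j) | j < r].
Proof.
move=> r_gt0; set h := fun t : r.-tuple 'I_#|X| => [tuple enum_val (tnth t j) | j < r].
transitivity (\sum_(t in [set: r.-tuple 'I_#|X|]%SET) G (h t)); last first.
  by apply: eq_bigl => t; rewrite inE.
rewrite -(big_imset (h := h)) /=; last first.
  move=> t1 t2 _ _ h12; apply: eq_from_tnth => j.
  by have := congr1 (fun t => tnth t j) h12; rewrite !tnth_mktuple => /enum_val_inj.
apply: eq_bigl => t; apply/forallP/imsetP => [tX|[t' _ ->] j].
  exists [tuple enum_rank_in (tX (Ordinal r_gt0)) (tnth t j) | j < r]; first by rewrite inE.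
  by apply: eq_from_tnth => j; rewrite !tnth_mktuple enum_rankK_in.
by rewrite tnth_mktuple enum_valP.
Qed.

Section PSphere.
Variables (R : realType) (r : nat) (p : R).
Hypothesis p_gt0 : 0 < p.

Definition psphere m : set ('I_m -> R) := [set x | \sum_(i < m) `|x i| `^ p = 1].
Arguments psphere : clear implicits.

Lemma lambdapE m (B : cmatrix R r m) : lambdap p B = sup (Pform B @` psphere m).
Proof. by []. Qed.

Lemma normr_le1_psphere m (x : 'I_m -> R) i : psphere m x -> `|x i| <= 1.
Proof.
move=> xS; rewrite leNgt; apply/negP => gt1.
have := @gt0_ltr_powR _ p p_gt0 1 `|x i|; rewrite !nnegrE ler01 normr_ge0 powR1.
move=> /(_ isT isT gt1); rewrite ltNge -xS (bigD1 i) //= lerDl.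
by rewrite sumr_ge0 // => j _; exact: powR_ge0.
Qed.

Lemma psphere_delta m (k : 'I_m) : psphere m (fun j => (j == k)%:R).
Proof.
rewrite /psphere /= (bigD1 k) //= eqxx normr1 powR1 big1 ?addr0 // => j /negbTE ->.
by rewrite normr0 powR0 // gt_eqF.
Qed.

Lemma Pform_le_sum_normr m (B : cmatrix R r m) (x : 'I_m -> R) :
  psphere m x -> Pform B x <= \sum_t `|B t|.
Proof.
move=> xS; apply: ler_sum => t _; apply: le_trans (ler_norm _) _.
rewrite normrM normr_prod ler_piMr // prodr_ile1 // => j _.
by rewrite normr_ge0 normr_le1_psphere.
Qed.

Lemma has_sup_Pform_psphere m (B : cmatrix R r m) :
  psphere m !=set0 -> has_sup (Pform B @` psphere m).
Proof.
move=> [x xS]; split; first by exists (Pform B x), x.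
by exists (\sum_t `|B t|) => _ [y yS <-]; exact: Pform_le_sum_normr.
Qed.

Lemma Pform_le_lambdap m (B : cmatrix R r m) (x : 'I_m -> R) :
  psphere m x -> Pform B x <= lambdap p B.
Proof.
move=> xS; apply: sup_upper_bound; last by exists x.
by apply: has_sup_Pform_psphere; exists x.
Qed.

Lemma lambdap_approx m (B : cmatrix R r m) (k : 'I_m) (eps : R) : 0 < eps ->
  exists2 x, psphere m x & lambdap p B - eps < Pform B x.
Proof.
move=> eps_gt0; have Sk := has_sup_Pform_psphere B (ex_intro _ _ (psphere_delta k)).
by have [_ [x xS <-] ?] := sup_adherent eps_gt0 Sk; exists x.
Qed.

Lemma lambdap_approx_enum_val n (X : {set 'I_n}) (B : cmatrix R r #|X|) i eps :
  i \in X -> 0 < eps -> exists z : 'I_n -> R,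
    psphere #|X| (fun k => z (enum_val k)) /\
    lambdap p B - eps < Pform B (fun k => z (enum_val k)).
Proof.
move=> iX /(lambdap_approx B (enum_rank_in iX i))[y yS yB].
exists (fun j => y (enum_rank_in iX j)).
by rewrite (_ : (fun k => _) = y) //; apply/funext => k; rewrite enum_valK_in.
Qed.

Lemma lambdap_psphere0 m (B : cmatrix R r m) : psphere m = set0 -> lambdap p B = 0.
Proof. by move=> S0; rewrite lambdapE S0 image_set0 sup0. Qed.

Lemma Pform_ge0 m (B : cmatrix R r m) (x : 'I_m -> R) :
  cnonneg B -> (forall i, 0 <= x i) -> 0 <= Pform B x.
Proof.
by move=> B_ge0 x_ge0; apply: sumr_ge0 => t _; rewrite mulr_ge0 ?prodr_ge0.
Qed.

Lemma lambdap_ge0 m (B : cmatrix R r m) : cnonneg B -> 0 <= lambdap p B.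
Proof.
move=> B_ge0.
have [/(lambdap_psphere0 B)->//|/set0P[x xS]] := eqVneq (psphere m) set0.
have absxS : psphere m (fun i => `|x i|).
  by rewrite /psphere /=; under eq_bigr do rewrite normr_id.
by apply: le_trans (Pform_le_lambdap B absxS); exact: Pform_ge0.
Qed.

Lemma lambdap_eq0 m (B : cmatrix R r m) : ~~ cnonzero B -> lambdap p B = 0.
Proof.
move=> /existsPn B0; have PB0 x : Pform B x = 0.
  by apply: big1 => t _; move: (B0 t); rewrite negbK => /eqP ->; rewrite mul0r.
have [/(lambdap_psphere0 B)//|/set0P[x xS]] := eqVneq (psphere m) set0.
rewrite lambdapE (_ : _ @` _ = [set 0]) ?sup1 //.
by apply/seteqP; split=> [_ [y _ <-]|_ ->]; [rewrite /= PB0|exists x; rewrite ?PB0].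
Qed.

Lemma PformZ m (B : cmatrix R r m) (c : R) (y : 'I_m -> R) :
  Pform B (fun i => c * y i) = c ^+ r * Pform B y.
Proof.
rewrite /Pform mulr_sumr; apply: eq_bigr => t _.
by rewrite big_split /= prodr_const card_ord mulrCA.
Qed.

Lemma sum_powR_normrZ m (c : R) (y : 'I_m -> R) : 0 <= c ->
  \sum_i `|c * y i| `^ p = c `^ p * \sum_i `|y i| `^ p.
Proof.
move=> c_ge0; rewrite mulr_sumr; apply: eq_bigr => i _.
by rewrite normrM ger0_norm // powRM.
Qed.

Lemma Pform_le_lambdap_powR m (B : cmatrix R r m) (y : 'I_m -> R) : (0 < r)%N ->
  Pform B y <= lambdap p B * (\sum_i `|y i| `^ p) `^ (r%:R / p).
Proof.
move=> r_gt0; set u := \sum_i _.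
have u_ge0 : 0 <= u by apply: sumr_ge0 => i _; exact: powR_ge0.
have rp_neq0 : r%:R / p != 0 by rewrite mulf_neq0 ?invr_eq0 ?gt_eqF ?ltr0n.
have [u0|u_neq0] := eqVneq u 0.
  have y0 i : y i = 0.
    have /(_ i isT) := psumr_eq0P (fun j _ => powR_ge0 `|y j| p) u0.
    by move/powR_eq0_eq0/normr0_eq0.
  rewrite u0 powR0 // mulr0 /Pform big1 // => t _.
  by rewrite (bigD1 (Ordinal r_gt0)) //= y0 mul0r mulr0.
have u_gt0 : 0 < u by rewrite lt_def u_neq0.
have cyS : psphere m (fun i => u `^ (- p^-1) * y i).
  rewrite /psphere /= sum_powR_normrZ ?powR_ge0 // -/u -powRrM mulNr.
  by rewrite mulVf ?gt_eqF // powR_inv1 // mulVf.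
have := Pform_le_lambdap B cyS.
rewrite PformZ -powR_mulrn ?powR_ge0 // -powRrM mulNr powRN ler_pdivrMl ?powR_gt0 //.
by rewrite [lambdap _ _ * _]mulrC [p^-1 * _]mulrC.
Qed.

End PSphere.
Arguments psphere {R} p m.

Lemma holder_sum_powR (R : realType) (I : finType) (P : pred I) (a u : I -> R)
    (q s : R) :
  0 < q -> 0 < s -> q^-1 + s = 1 ->
  (forall i, 0 <= a i) -> (forall i, 0 <= u i) -> \sum_(i | P i) u i <= 1 ->
  \sum_(i | P i) a i * u i `^ s <= (\sum_(i | P i) a i `^ q) `^ q^-1.
Proof.
move=> q_gt0 s_gt0 qs1 a_ge0 u_ge0 u_le1; set T := \sum_(i | P i) _.
have T_ge0 : 0 <= T by apply: sumr_ge0 => i _; exact: powR_ge0.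
have [T0|T_neq0] := eqVneq T 0.
  rewrite big1 ?powR_ge0 // => i Pi.
  have /(_ i Pi) := psumr_eq0P (fun j _ => powR_ge0 (a j) q) T0.
  by move/powR_eq0_eq0 ->; rewrite mul0r.
have T_gt0 : 0 < T by rewrite lt_def T_neq0.
set L := T `^ q^-1; have L_gt0 : 0 < L by exact: powR_gt0.
have L_neq0 : L != 0 by rewrite gt_eqF.
have young i : a i * u i `^ s <= L * (a i `^ q / (T * q) + s * u i).
  have -> : a i * u i `^ s = L * (a i / L * u i `^ s).
    by rewrite mulrA mulrCA divff // mulr1.
  rewrite ler_wpM2l ?(ltW L_gt0) //.
  apply: le_trans (@conjugate_powR _ _ _ q s^-1 _ _ q_gt0 _ _) _.
  - by rewrite divr_ge0 ?(ltW L_gt0).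
  - exact: powR_ge0.
  - by rewrite invr_gt0.
  - by rewrite invrK.
  rewrite -powRrM mulfV ?gt_eqF // powRr1 ?u_ge0 // invrK [u i * s]mulrC lerD2r.
  rewrite powRM ?invr_ge0 ?(ltW L_gt0) // -powRN -powRrM mulNr mulVf ?gt_eqF //.
  by rewrite powR_inv1 // invfM mulrA.
apply: le_trans (ler_sum _ (fun i _ => young i)) _.
rewrite -mulr_sumr big_split /= -mulr_suml -/T -mulr_sumr invfM mulrA mulfV ?gt_eqF //.
rewrite -[leRHS]mulr1 ler_wpM2l ?(ltW L_gt0) // mul1r -qs1 lerD2l.
by rewrite -[leRHS]mulr1 ler_wpM2l ?(ltW s_gt0).
Qed.

Section Components.
Variables (R : realType) (r n : nat) (A : cmatrix R r n).

Definition cedge : rel 'I_n := fun a b => cadj A a b || cadj A b a.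
Definition ccomp (i : 'I_n) : {set 'I_n} := finset (connect cedge i).

Lemma ccompsE : ccomps A = (ccomp @: [set: 'I_n])%SET.
Proof. by []. Qed.

Lemma ccomp_refl i : i \in ccomp i.
Proof. by rewrite inE connect0. Qed.

Lemma ccomp_ccomps i : ccomp i \in ccomps A.
Proof. by rewrite ccompsE imset_f. Qed.

Lemma ccomp_eq i j : j \in ccomp i -> ccomp j = ccomp i.
Proof.
have cedge_sym : connect_sym cedge.
  by apply: sym_connect_sym => a b; rewrite /cedge orbC.
rewrite inE => ij; apply/setP => k; rewrite !inE.
by apply/idP/idP; [exact: connect_trans | apply: connect_trans; rewrite cedge_sym].
Qed.

Lemma ccompsP X i : X \in ccomps A -> i \in X -> X = ccomp i.
Proof. by move=> /imsetP[k _ ->] /ccomp_eq ->. Qed.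

Lemma ccomp_enum_val (X : {set 'I_n}) (k : 'I_#|X|) :
  X \in ccomps A -> ccomp (enum_val k) = X.
Proof. by move=> XA; rewrite -(ccompsP XA (enum_valP k)). Qed.

Lemma ccomp_tnth (t : r.-tuple 'I_n) (r_gt0 : (0 < r)%N) j :
  A t != 0 -> tnth t j \in ccomp (tnth t (Ordinal r_gt0)).
Proof.
move=> At_neq0; case tE: (val t) => [|k s].
  by exfalso; have := size_tuple t; rewrite tE => r0; move: r_gt0; rewrite -r0.
have -> : tnth t (Ordinal r_gt0) = k by rewrite (tnth_nth k) /= tE.
have : tnth t j \in val t := mem_tnth j t.
rewrite tE in_cons => /predU1P[->|js]; first exact: ccomp_refl.
rewrite inE; apply: connect1; apply/orP; left.
by apply/existsP; exists t; rewrite At_neq0 tE eqxx js.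
Qed.

Lemma sum_ccomps (g : 'I_n -> R) :
  \sum_i g i = \sum_(X in ccomps A) \sum_(k < #|X|) g (enum_val k).
Proof.
rewrite (@sum_unique_cover _ _ _ (ccomps A) (fun X i => i \in X)).
  by apply: eq_bigr => X _; rewrite big_enum_val.
move=> i _; exists (ccomp i); first exact: ccomp_ccomps.
by split=> [|Y YA iY]; [exact: ccomp_refl | exact: ccompsP].
Qed.

Lemma Pform_ccomps (x : 'I_n -> R) : (0 < r)%N ->
  Pform A x = \sum_(X in ccomps A) Pform (psub A X) (fun k => x (enum_val k)).
Proof.
move=> r_gt0; rewrite /Pform (@sum_unique_cover _ _ _ (ccomps A)
  (fun X t => [forall j, tnth t j \in X])).
  apply: eq_bigr => X _; rewrite sum_tuple_in_set //; apply: eq_bigr => t _.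
  by congr (_ * _); apply: eq_bigr => j _; rewrite tnth_mktuple.
move=> t Ft; have At_neq0 : A t != 0 by apply: contraNneq Ft => ->; rewrite mul0r.
exists (ccomp (tnth t (Ordinal r_gt0))); first exact: ccomp_ccomps.
split=> [|Y YA /forallP tY]; first by apply/forallP => j; exact: ccomp_tnth.
exact: ccompsP (tY _).
Qed.

End Components.

Section LambdapComponents.
Variables (R : realType) (r n : nat) (p : R) (A : cmatrix R r n).
Hypotheses (r_gt0 : (0 < r)%N) (r_lt_p : r%:R < p) (A_ge0 : cnonneg A).

Let p_gt0 : 0 < p. Proof. by apply: lt_trans r_lt_p; rewrite ltr0n. Qed.
Let pr_gt0 : 0 < p - r%:R. Proof. by rewrite subr_gt0. Qed.
Let psub_ge0 X : cnonneg (psub A X). Proof. by move=> t; exact: A_ge0. Qed.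

Lemma lambdap_le_components :
  lambdap p A <=
  (\sum_(X in ccomps A) lambdap p (psub A X) `^ (p / (p - r%:R))) `^ ((p - r%:R) / p).
Proof.
rewrite lambdapE; have [->|/set0P[x0 x0S]] := eqVneq (psphere p n) set0.
  by rewrite image_set0 sup0 powR_ge0.
apply: ge_sup; first by exists (Pform A x0), x0.
move=> _ [x xS <-]; rewrite Pform_ccomps // -[(p - r%:R) / p]invrK invf_div.
set u := fun X : {set 'I_n} => \sum_(k < #|X|) `|x (enum_val k)| `^ p.
apply: le_trans (holder_sum_powR (a := fun X => lambdap p (psub A X)) (u := u)
  (s := r%:R / p) _ _ _ _ _ _); last first.
- by rewrite -(sum_ccomps A (fun i => `|x i| `^ p)) xS.
- by move=> X; apply: sumr_ge0 => k _; exact: powR_ge0.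
- by move=> X; exact: lambdap_ge0.
- by rewrite invf_div; field; rewrite gt_eqF.
- by rewrite divr_gt0 // ltr0n.
- by rewrite divr_gt0.
by apply: ler_sum => X _; exact: Pform_le_lambdap_powR.
Qed.

Lemma lambdap_ge_weighted_components (c : {set 'I_n} -> R) :
  (forall X, 0 <= c X) -> \sum_(X in ccomps A) c X = 1 ->
  \sum_(X in ccomps A) c X `^ (r%:R / p) * lambdap p (psub A X) <= lambdap p A.
Proof.
move=> c_ge0 c_sum1; set C := \sum_(X in ccomps A) c X `^ (r%:R / p).
have C_ge0 : 0 <= C by apply: sumr_ge0 => X _; exact: powR_ge0.
apply/ler_addgt0Pr => eps eps_gt0; set eps' := eps / (C + 1).
have eps'_gt0 : 0 < eps' by rewrite divr_gt0 // ltr_wpDl.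
have zX X : exists z : 'I_n -> R, X \in ccomps A ->
    psphere p #|X| (fun k => z (enum_val k)) /\
    lambdap p (psub A X) - eps' < Pform (psub A X) (fun k => z (enum_val k)).
  have [XA|_] := boolP (X \in ccomps A); last by exists (fun=> 0).
  have [i _ Xi] := imsetP XA; rewrite Xi in XA *.
  have [z zX] := lambdap_approx_enum_val p_gt0 (psub A (ccomp A i))
    (ccomp_refl A i) eps'_gt0.
  by exists z.
have [z zXP] := choice zX.
pose x i := c (ccomp A i) `^ p^-1 * z (ccomp A i) i.
have xX X : X \in ccomps A ->
    (fun k : 'I_#|X| => x (enum_val k)) = (fun k => c X `^ p^-1 * z X (enum_val k)).
  by move=> XA; apply/funext => k; rewrite /x ccomp_enum_val.
have xS : psphere p n x.
  rewrite /psphere /= (sum_ccomps A) -c_sum1; apply: eq_bigr => X XA.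
  have [zS _] := zXP X XA.
  rewrite (eq_bigr (fun k => `|c X `^ p^-1 * z X (enum_val k)| `^ p)); last first.
    by move=> k _; rewrite /x ccomp_enum_val.
  by rewrite sum_powR_normrZ ?powR_ge0 // zS mulr1 -powRrM mulVf ?gt_eqF // powRr1.
have Pz : \sum_(X in ccomps A) c X `^ (r%:R / p) * lambdap p (psub A X) <=
    Pform A x + eps' * C.
  rewrite Pform_ccomps // mulr_sumr -big_split /=; apply: ler_sum => X XA.
  have [_ zB] := zXP X XA.
  rewrite xX // PformZ -powR_mulrn ?powR_ge0 // -powRrM [p^-1 * _]mulrC.
  rewrite [eps' * _]mulrC -mulrDr ler_wpM2l ?powR_ge0 //.
  by rewrite -lerBlDr ltW.
apply: le_trans Pz _; apply: lerD; first exact: Pform_le_lambdap xS.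
by rewrite /eps' mulrAC ler_pdivrMr ?ltr_wpDl // ler_wpM2l ?(ltW eps_gt0) // lerDl.
Qed.

Lemma lambdap_ge_components :
  (\sum_(X in ccomps A) lambdap p (psub A X) `^ (p / (p - r%:R)))
    `^ ((p - r%:R) / p) <= lambdap p A.
Proof.
set q := p / (p - r%:R); set s := r%:R / p; set T := \sum_(X in ccomps A) _.
have T_ge0 : 0 <= T by apply: sumr_ge0 => X _; exact: powR_ge0.
have [->|T_neq0] := eqVneq T 0.
  by rewrite powR0 ?lambdap_ge0 // mulf_neq0 ?invr_eq0 ?gt_eqF.
have T_gt0 : 0 < T by rewrite lt_def T_neq0.
(* The weights of the equality case of Hölder's inequality. *)
pose c X := lambdap p (psub A X) `^ q / T.
have c_term X : c X `^ s * lambdap p (psub A X) = lambdap p (psub A X) `^ q / T `^ s.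
  have l_ge0 : 0 <= lambdap p (psub A X) by exact: lambdap_ge0.
  have qs1 : q * s + 1 = q by rewrite /q /s; field; rewrite !gt_eqF.
  rewrite powRM ?powR_ge0 ?invr_ge0 // -powR_inv1 // -!powRrM mulN1r powRN.
  rewrite mulrAC -{2}(powRr1 l_ge0) -powRD; first by congr (_ `^ _ / _).
  by rewrite qs1 gt_eqF ?divr_gt0.
apply: le_trans (lambdap_ge_weighted_components (c := c) _ _); last 2 first.
- by move=> X; rewrite divr_ge0 ?powR_ge0.
- by rewrite -mulr_suml mulfV.
rewrite (eq_bigr _ (fun X _ => c_term X)) -mulr_suml -/T.
rewrite -{2}(powRr1 T_ge0) -powRB ?T_neq0 ?implybT //.
rewrite (_ : 1 - s = (p - r%:R) / p) //.
by rewrite /s; field; rewrite gt_eqF.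
Qed.

End LambdapComponents.

Lemma sum_lambdap_cnonzero (R : realType) r n (p q : R) (A : cmatrix R r n)
    (S : {set {set 'I_n}}) : q != 0 ->
  \sum_(X in S | cnonzero (psub A X)) lambdap p (psub A X) `^ q =
  \sum_(X in S) lambdap p (psub A X) `^ q.
Proof.
move=> q_neq0; rewrite big_mkcondr /=; apply: eq_bigr => X _.
by case: ifP => // /negbT/lambdap_eq0 ->; rewrite powR0.
Qed.

Theorem theorem11 (R : realType) (r n : nat) (p : R) (A : cmatrix R r n) :
  (2 <= r)%N -> r%:R < p -> csym A -> cnonneg A ->
  lambdap p A =
  (\sum_(X in ccomps A | cnonzero (psub A X))
      (lambdap p (psub A X)) `^ (p / (p - r%:R))) `^ ((p - r%:R) / p).
Proof.
move=> r_ge2 r_lt_p _ A_ge0; have r_gt0 : (0 < r)%N by apply: leq_trans r_ge2.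
have p_gt0 : 0 < p by apply: lt_trans r_lt_p; rewrite ltr0n.
rewrite sum_lambdap_cnonzero ?mulf_neq0 ?invr_eq0 ?gt_eqF ?subr_gt0 //.
apply/le_anti/andP; split; first exact: lambdap_le_components.
exact: lambdap_ge_components.
Qed.
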